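(* In the setting below, if $S_1,S_2\in\mathrm{Lin}(\mathcal{C}_1,\mathcal{C}_2)^\tau$, then there exists $R\ge 0$ such that $d_{\mathcal{C}_2}(S_1(x),S_2(x))\le R$ for all $x\in\mathcal{C}_1$.
   Context: Let $M_i=\Gamma_i\backslash\Omega_i$ ($i=1,2$) be compact proper convex real projective manifolds ($\Omega_i\subset\mathbb{P}(\mathbb{R}^{d_i+1})$ proper convex open, $\Gamma_i$ discrete acting properly discontinuously, freely, cocompactly). Let $\mathcal{C}_i$ be a component of the preimage of $\Omega_i$ in $\mathbb{R}^{d_i+1}\setminus\{0\}$ (a convex open cone containing no affine line), $\overline\Gamma_i=\{\gamma\in\mathrm{GL}_{d_i+1}(\mathbb{R}):|\det\gamma|=1,\gamma\mathcal{C}_i=\mathcal{C}_i,[\gamma]\in\Gamma_i\}$ and $\Lambda_i=\langle\overline\Gamma_i,e\,\mathrm{Id}\rangle$, a discrete group acting cocompactly on $\mathcal{C}_i$. Let $\tau:\Lambda_1\to\Lambda_2$ be a homomorphism. $\mathrm{Lin}(\mathcal{C}_1,\mathcal{C}_2)^\tau$ is the set of linear maps $S:\mathbb{R}^{d_1+1}\to\mathbb{R}^{d_2+1}$ with $S(\mathcal{C}_1)\subset\mathcal{C}_2$ and $S\circ\phi=\tau(\phi)\circ S$ for all $\phi\in\Lambda_1$. Viewing $\mathbb{R}^{d_2+1}$ as an affine chart of $\mathbb{P}(\mathbb{R}^{d_2+2})$, $\mathcal{C}_2$ is a proper convex open set and $d_{\mathcal{C}_2}$ is its Hilbert metric: $d(x,y)=\log\frac{|x-b||y-a|}{|x-a||y-b|}$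 where $a,b$ are the boundary points (possibly at infinity) on the line through $x,y$, ordered $a,x,y,b$. *)

From HB Require Import structures.
From Stdlib Require Import Reals Lra ClassicalEpsilon FunctionalExtensionality.
From mathcomp Require Import all_boot all_algebra.
Set Implicit Arguments. Unset Strict Implicit. Unset Printing Implicit Defensive.

Definition Reqb (x y : R) : bool := if Req_EM_T x y then true else false.
Lemma R_eqP : Equality.axiom Reqb.
Proof. by move=> x y; rewrite /Reqb; case: Req_EM_T => H; constructor. Qed.
HB.instance Definition _ := hasDecEq.Build R R_eqP.

Definition R_find (P : pred R) (_ : nat) : option R :=
  match excluded_middle_informative (exists x, P x) with
  | left H => Some (proj1_sig (constructive_indefinite_description _ H))
  | right _ => None end.
Lemma R_find_some P n x : R_find P n = Some x -> P x.
Proof. rewrite /R_find; case: excluded_middle_informative => // H [<-].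
by case: constructive_indefinite_description. Qed.
Lemma R_find_ex (P : pred R) : (exists x, P x) -> exists n, R_find P n.
Proof. by move=> H; exists 0%N; rewrite /R_find; case: excluded_middle_informative. Qed.
Lemma R_find_ext (P Q : pred R) : P =1 Q -> R_find P =1 R_find Q.
Proof. by move=> /functional_extensionality ->. Qed.
HB.instance Definition _ := hasChoice.Build R R_find_some R_find_ex R_find_ext.

Lemma R_addA : associative Rplus. Proof. by move=> *; ring. Qed.
Lemma R_addC : commutative Rplus. Proof. by move=> *; ring. Qed.
Lemma R_add0 : left_id R0 Rplus. Proof. by move=> *; ring. Qed.
Lemma R_addN : left_inverse R0 Ropp Rplus. Proof. by move=> *; ring. Qed.
HB.instance Definition _ := @GRing.isZmodule.Build R R0 Ropp Rplus R_addA R_addC R_add0 R_addN.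
Lemma R_mulA : associative Rmult. Proof. by move=> *; ring. Qed.
Lemma R_mulC : commutative Rmult. Proof. by move=> *; ring. Qed.
Lemma R_mul1 : left_id R1 Rmult. Proof. by move=> *; ring. Qed.
Lemma R_mulDl : left_distributive Rmult Rplus. Proof. by move=> *; ring. Qed.
Lemma R_one0 : (R1 != R0 :> R). Proof. by apply/eqP; exact R1_neq_R0. Qed.
HB.instance Definition _ := @GRing.Zmodule_isComNzRing.Build R R1 Rmult R_mulA R_mulC R_mul1 R_mulDl R_one0.
Lemma R_mulVf (x : R) : x != R0 -> Rmult (Rinv x) x = R1.
Proof. by move/eqP=> H; apply: Rinv_l. Qed.
HB.instance Definition _ := @GRing.ComNzRing_isField.Build R Rinv R_mulVf Rinv_0.


Local Open Scope ring_scope.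

Definition supnorm n (x : 'cV[R]_n) : R := \big[Rmax/R0]_(i < n) Rabs (x i 0).

(* Euclidean-topology notions on R^n (any norm gives the same topology). *)
Definition open_set n (C : 'cV[R]_n -> Prop) : Prop :=
  forall x, C x -> exists eps, Rlt R0 eps /\
    forall y, Rlt (supnorm (y - x)) eps -> C y.

Definition closed_set n (K : 'cV[R]_n -> Prop) : Prop :=
  forall (u : nat -> 'cV[R]_n) (l : 'cV[R]_n),
    (forall k, K (u k)) -> (forall i j, Un_cv (fun k => u k i j) (l i j)) -> K l.

(* C is a convex open cone containing no affine line (the component of the
   preimage of a proper convex open set Omega = P(C) of P(R^n)). *)
Record proper_convex_open_cone n (C : 'cV[R]_n -> Prop) : Prop := {
  pcc_nonempty : exists x, C x;
  pcc_open : open_set C;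
  pcc_convex : forall x y t, C x -> C y -> Rle R0 t -> Rle t R1 ->
                 C ((R1 - t) *: x + t *: y);
  pcc_cone : forall x lam, C x -> Rlt R0 lam -> C (lam *: x);
  pcc_noline : ~ (exists p v : 'cV[R]_n, v != 0 /\ forall t, C (p + t *: v))
}.

(* A subgroup Gamma of PGL_n(R), given by its full preimage [Gam] in GL_n(R):
   [Gam g] means [g] \in Gamma. *)
Record pgl_subgroup n (Gam : 'M[R]_n.+1 -> Prop) : Prop := {
  pgl_unit : forall g, Gam g -> g \in unitmx;
  pgl_one : Gam 1%:M;
  pgl_mul : forall g h, Gam g -> Gam h -> Gam (g *m h);
  pgl_inv : forall g, Gam g -> Gam (invmx g);
  pgl_scale : forall g c, Gam g -> c != 0 -> Gam (c *: g)
}.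

(* Gamma preserves Omega = P(C): the preimage of Omega is C \cup -C. *)
Definition preserves_Omega n (C : 'cV[R]_n.+1 -> Prop) (Gam : 'M[R]_n.+1 -> Prop) :=
  forall g x, Gam g -> C x -> C (g *m x) \/ C (- (g *m x)).

Definition discrete_pgl n (Gam : 'M[R]_n.+1 -> Prop) : Prop :=
  exists eps, Rlt R0 eps /\
    forall g, Gam g -> (forall i j, Rlt (Rabs (g i j - (1%:M : 'M[R]_n.+1) i j)) eps) ->
      exists c, g = c%:M.

Definition Gbar n (C : 'cV[R]_n.+1 -> Prop) (Gam : 'M[R]_n.+1 -> Prop) (g : 'M[R]_n.+1) : Prop :=
  Gam g /\ Rabs (\det g) = R1 /\ (forall x, C (g *m x) <-> C x).

(* Subsets of Omega = P(C) are represented by subsets K of C saturated under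
   positive scaling; K is compact in P(R^n) iff its trace on the unit sphere
   (for the sup norm) is compact, i.e. closed. *)
Definition compact_in_Omega n (C K : 'cV[R]_n -> Prop) : Prop :=
  (forall x, K x -> C x) /\
  (forall x lam, K x -> Rlt R0 lam -> K (lam *: x)) /\
  closed_set (fun x => K x /\ supnorm x = R1).

(* The action of Gamma on Omega is properly discontinuous, free and cocompact
   (expressed through the lifts \overline\Gamma, which are in bijection with Gamma). *)
Definition properly_discontinuous n (C : 'cV[R]_n.+1 -> Prop) (Gam : 'M[R]_n.+1 -> Prop) :=
  forall K, compact_in_Omega C K ->
    exists l : seq 'M[R]_n.+1,
      forall g, Gbar C Gam g -> (exists x, K x /\ K (g *m x)) -> g \in l.

Definition acts_freely n (C : 'cV[R]_n.+1 -> Prop) (Gam : 'M[R]_n.+1 -> Prop) :=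
  forall g x, Gbar C Gam g -> C x ->
    (exists lam, Rlt R0 lam /\ g *m x = lam *: x) -> exists c, g = c%:M.

Definition acts_cocompactly n (C : 'cV[R]_n.+1 -> Prop) (Gam : 'M[R]_n.+1 -> Prop) :=
  exists K, compact_in_Omega C K /\
    forall x, C x -> exists g y, Gbar C Gam g /\ K y /\ g *m y = x.

Record compact_convex_proj_manifold d (C : 'cV[R]_d.+1 -> Prop) (Gam : 'M[R]_d.+1 -> Prop) : Prop := {
  ccpm_cone : proper_convex_open_cone C;
  ccpm_group : pgl_subgroup Gam;
  ccpm_preserves : preserves_Omega C Gam;
  ccpm_discrete : discrete_pgl Gam;
  ccpm_propdisc : properly_discontinuous C Gam;
  ccpm_free : acts_freely C Gam;
  ccpm_cocompact : acts_cocompactly C Gam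
}.

Inductive gen_group n (A : 'M[R]_n.+1 -> Prop) : 'M[R]_n.+1 -> Prop :=
  | gen_base g : A g -> gen_group A g
  | gen_one : gen_group A 1%:M
  | gen_mul g h : gen_group A g -> gen_group A h -> gen_group A (g *m h)
  | gen_inv g : gen_group A g -> gen_group A (invmx g).

Definition Lambda n (C : 'cV[R]_n.+1 -> Prop) (Gam : 'M[R]_n.+1 -> Prop) : 'M[R]_n.+1 -> Prop :=
  gen_group (fun g => Gbar C Gam g \/ g = (exp R1)%:M).

Definition group_hom n1 n2 (L1 : 'M[R]_n1.+1 -> Prop) (L2 : 'M[R]_n2.+1 -> Prop)
    (tau : 'M[R]_n1.+1 -> 'M[R]_n2.+1) : Prop :=
  (forall g, L1 g -> L2 (tau g)) /\
  (forall g h, L1 g -> L1 h -> tau (g *m h) = tau g *m tau h).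

Definition Lin_tau n1 n2 (C1 : 'cV[R]_n1.+1 -> Prop) (C2 : 'cV[R]_n2.+1 -> Prop)
    (L1 : 'M[R]_n1.+1 -> Prop) (tau : 'M[R]_n1.+1 -> 'M[R]_n2.+1)
    (S : 'M[R]_(n2.+1, n1.+1)) : Prop :=
  (forall x, C1 x -> C2 (S *m x)) /\
  (forall phi, L1 phi -> S *m phi = tau phi *m S).

(* supremum in R of a set of reals, None if it has no least upper bound
   (for the nonempty sets used below: None means +infinity) *)
Definition Rsup_opt (E : R -> Prop) : option R :=
  match excluded_middle_informative (exists l, is_lub E l) with
  | left H => Some (proj1_sig (constructive_indefinite_description _ H))
  | right _ => None
  end.

(* Hilbert metric of a convex open set C of the affine space R^n:
   d(x,y) = log (|x-b||y-a| / (|x-a||y-b|)), a, b the boundary points of the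
   line through x, y, ordered a, x, y, b (possibly at infinity).  Parametrising
   the line as p t = x + t (y - x), b = p tb, a = p (-sa) with tb > 1, sa > 0:
   d = log (tb/(tb-1)) + log ((1+sa)/sa), a term being 0 when the
   corresponding boundary point is at infinity. *)
Definition hilbert_dist n (C : 'cV[R]_n -> Prop) (x y : 'cV[R]_n) : R :=
  if x == y then R0 else
  let p := fun t : R => x + t *: (y - x) in
  let fb := match Rsup_opt (fun t => C (p t)) with
            | Some tb => Rdiv tb (Rminus tb R1) | None => R1 end in
  let fa := match Rsup_opt (fun s => C (p (Ropp s))) with
            | Some sa => Rdiv (Rplus R1 sa) sa | None => R1 end in
  Rplus (ln fb) (ln fa).

(* Every x in C1 is g (lam y) with g in Lambda1, lam > 0 and y in the unit-norm
   slice P of a compact fundamental domain K.  Equivariance gives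
   S_i x = (tau(g) lam) S_i y, and tau(g) lam preserves C2, hence is an isometry
   of the Hilbert metric; so it suffices to bound d(S1 y, S2 y) for y in P.
   Compactness of P yields eps > 0 such that the eps-balls around all S_i y lie
   in C2.  If eps-balls around u and v lie in C, the line through u and v stays
   in C a distance eps/2 beyond each of them, which bounds both cross-ratio
   terms of d(u, v) by log (1 + 2 |v - u| / eps). *)

From Pilot Require Import Defs.
From HB Require Import structures.
From Stdlib Require Import Reals Lra Classical ClassicalEpsilon.
From Stdlib Require Import FunctionalExtensionality PropExtensionality.
From mathcomp Require Import all_boot all_algebra.
From Coquelicot Require Compactness.
Set Implicit Arguments. Unset Strict Implicit.
Import GRing.Theory.
Local Open Scope ring_scope.

Section Supnorm.
Variable n : nat.
Implicit Types (u v : 'cV[R]_n).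

Lemma supnorm_ge_coord v i : Rle (Rabs (v i 0)) (supnorm v).
Proof.
rewrite /supnorm; elim: (index_enum _) (mem_index_enum i) => // j s IH.
rewrite inE big_cons => /orP[/eqP-> | /IH h]; first exact: Rmax_l.
exact: Rle_trans h (Rmax_r _ _).
Qed.

Lemma supnorm_le v d : Rle 0 d -> (forall i, Rle (Rabs (v i 0)) d) ->
  Rle (supnorm v) d.
Proof. by move=> d0 h; apply: (big_ind (Rle^~ d)) => // *; apply: Rmax_lub. Qed.

Lemma supnorm_lt v d : Rlt 0 d -> (forall i, Rlt (Rabs (v i 0)) d) ->
  Rlt (supnorm v) d.
Proof. by move=> d0 h; apply: (big_ind (Rlt^~ d)) => // *; apply: Rmax_lub_lt. Qed.

Lemma supnorm_ge0 v : Rle 0 (supnorm v).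
Proof.
apply: (big_ind (Rle 0)) => [|x y x0 _|i _]; [exact: Rle_refl | | exact: Rabs_pos].
exact: Rle_trans x0 (Rmax_l _ _).
Qed.

Lemma supnorm_gt0 v : v != 0 -> Rlt 0 (supnorm v).
Proof.
move=> v0; case: (supnorm_ge0 v) => // /esym sv0; case/eqP: v0.
apply/matrixP => i j; rewrite ord1 mxE.
case: (Req_dec (v i 0) 0) => // /Rabs_no_R0 []; apply: Rle_antisym.
  by rewrite -sv0; apply: supnorm_ge_coord.
exact: Rabs_pos.
Qed.

Lemma supnormZ c v : supnorm (c *: v) = Rmult (Rabs c) (supnorm v).
Proof.
rewrite /supnorm; elim: (index_enum _) => [|j s IH]; first by rewrite !big_nil Rmult_0_r.
by rewrite !big_cons IH mxE Rabs_mult RmaxRmult //; apply: Rabs_pos.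
Qed.

Lemma supnormD_le u v : Rle (supnorm (u + v)) (Rplus (supnorm u) (supnorm v)).
Proof.
apply: supnorm_le => [|i]; first by apply: Rplus_le_le_0_compat; apply: supnorm_ge0.
rewrite mxE; apply: Rle_trans (Rabs_triang _ _) _.
by apply: Rplus_le_compat; apply: supnorm_ge_coord.
Qed.

Lemma supnorm_normalize v : v != 0 -> supnorm ((supnorm v)^-1 *: v) = 1.
Proof.
move=> v0; have sv0 := supnorm_gt0 v0.
rewrite supnormZ Rabs_right; first by apply: Rinv_l; lra.
by apply: Rle_ge; apply: Rlt_le; apply: Rinv_0_lt_compat.
Qed.

End Supnorm.

Lemma supnorm_mulmx_le m n (A : 'M[R]_(m, n)) : exists L, Rlt 0 L /\
  forall z, Rle (supnorm (A *m z)) (Rmult L (supnorm z)).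
Proof.
pose rowsums : 'cV[R]_m := \col_i \sum_j Rabs (A i j).
exists (Rplus 1 (supnorm rowsums)); split; first by have := supnorm_ge0 rowsums; lra.
move=> z; have z0 := supnorm_ge0 z.
apply: supnorm_le => [|i]; first by apply: Rmult_le_pos => //; have := supnorm_ge0 rowsums; lra.
have row_le : Rle (Rabs ((A *m z) i 0)) (rowsums i 0 * supnorm z).
  have -> : Rmult (rowsums i 0) (supnorm z) = \sum_j Rmult (Rabs (A i j)) (supnorm z).
    by rewrite mxE; exact: mulr_suml.
  rewrite mxE; apply: (big_ind2 (fun x y => Rle (Rabs x) y)).
  - by rewrite Rabs_R0; apply: Rle_refl.
  - by move=> *; apply: Rle_trans (Rabs_triang _ _) _; apply: Rplus_le_compat.
  - move=> j _; rewrite /GRing.mul /= Rabs_mult.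
    by apply: Rmult_le_compat_l; [apply: Rabs_pos | apply: supnorm_ge_coord].
apply: Rle_trans row_le _; apply: Rmult_le_compat_r => //.
have := supnorm_ge_coord rowsums i; have := Rle_abs (rowsums i 0); lra.
Qed.

(* Coquelicot proves compactness of boxes of [Tn m R], the m-fold product
   R * (R * ...); these convert between [Tn m R] and functions [nat -> R]. *)
Fixpoint Tn_of_fun (m : nat) (g : nat -> R) : Compactness.Tn m R :=
  if m is k.+1 then (g 0%N, Tn_of_fun k (fun j => g j.+1)) else tt.

Fixpoint Tn_nth (m : nat) : Compactness.Tn m R -> nat -> R :=
  match m return Compactness.Tn m R -> nat -> R with
  | 0 => fun _ _ => 0
  | k.+1 => fun t j => if j is j'.+1 then Tn_nth t.2 j' else t.1
  end.

Lemma Tn_nthK m (t : Compactness.Tn m R) : Tn_of_fun m (Tn_nth t) = t.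
Proof. by elim: m t => [[]|m IH [x t]] //=; rewrite IH. Qed.

Lemma close_n_Tn_of_fun m d g h :
  Compactness.close_n m d (Tn_of_fun m g) (Tn_of_fun m h) <->
  forall j, (j < m)%N -> Rlt (Rabs (g j - h j)) d.
Proof.
elim: m g h => [|m IH] g h //=; rewrite IH.
split=> [[h0 hs] [|j] // /hs // | hh].
by split=> [|j hj]; apply: hh.
Qed.

Lemma bounded_n_Tn_of_fun m ga gb g :
  Compactness.bounded_n m (Tn_of_fun m ga) (Tn_of_fun m gb) (Tn_of_fun m g) <->
  forall j, (j < m)%N -> Rle (ga j) (g j) /\ Rle (g j) (gb j).
Proof.
elim: m ga gb g => [|m IH] ga gb g //=; rewrite IH.
split=> [[h0 hs] [|j] // /hs // | hh].
by split=> [|j hj]; apply: hh.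
Qed.

Lemma closed_set_separated n (P : 'cV[R]_n -> Prop) (v : 'cV[R]_n) : Defs.closed_set P -> ~ P v ->
  exists rho, Rlt 0 rho /\ forall y, Rlt (supnorm (y - v)) rho -> ~ P y.
Proof.
move=> Pcl Pv; apply: NNPP => no_rho.
have near_v k : exists y, Rlt (supnorm (y - v)) (/ (INR k + 1)) /\ P y.
  apply: NNPP => no_y; apply: no_rho; exists (Rinv (INR k + 1)); split.
    by apply: Rinv_0_lt_compat; have := pos_INR k; lra.
  by move=> y hy Py; apply: no_y; exists y.
have [u hu] := choice _ near_v.
apply/Pv/(Pcl u) => [k | i j eps eps0]; first by case: (hu k).
have [N [N_eps N_pos]] := archimed_cor1 eps eps0.
exists N => k kN; rewrite /Rdist ord1.
have := supnorm_ge_coord (u k - v) i; rewrite !mxE => /Rle_lt_trans; apply.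
have : Rle (/ (INR k + 1)) (/ INR N).
  by apply: Rinv_le_contravar; [apply: lt_0_INR | have := le_INR _ _ kN; lra].
case: (hu k); lra.
Qed.

Lemma closed_bounded_finite_cover n (P : 'cV[R]_n.+1 -> Prop) (r : 'cV[R]_n.+1 -> R) :
  Defs.closed_set P -> (forall y, P y -> Rle (supnorm y) 1) -> (forall t, Rlt 0 (r t)) ->
  exists l : seq 'cV[R]_n.+1, forall y, P y ->
    exists t, List.In t l /\ P t /\ Rlt (supnorm (y - t)) (r t).
Proof.
move=> Pcl Pb r0.
(* Box points outside P get a ball missing P, so the cover only uses centres in P. *)
have radius v : exists rho, Rlt 0 rho /\ (P v -> rho = r v) /\
    (~ P v -> forall y, Rlt (supnorm (y - v)) rho -> ~ P y).
  case: (classic (P v)) => Pv; first by exists (r v).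
  by have [rho [rho0 hrho]] := closed_set_separated Pcl Pv; exists rho.
have [rho hrho] := choice _ radius.
pose vec (t : Compactness.Tn n.+1 R) : 'cV[R]_n.+1 := \col_i Tn_nth t i.
pose delta t := mkposreal (rho (vec t)) (proj1 (hrho (vec t))).
apply: NNPP => no_cover.
apply: (Compactness.compactness_list n.+1 (Tn_of_fun n.+1 (fun _ => Ropp R1))
  (Tn_of_fun n.+1 (fun _ => R1)) delta) => -[l hl]; apply: no_cover.
exists (List.map vec l) => y Py.
have y_box : Compactness.bounded_n n.+1 (Tn_of_fun n.+1 (fun _ => Ropp R1))
    (Tn_of_fun n.+1 (fun _ => R1)) (Tn_of_fun n.+1 (fun j => y (inord j) 0)).
  apply/bounded_n_Tn_of_fun => j _.
  have := supnorm_ge_coord y (inord j); have := Pb y Py.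
  by split_Rabs; lra.
have [t [tl [_ yt]]] := hl _ y_box.
have near_t : Rlt (supnorm (y - vec t)) (rho (vec t)).
  move: yt; rewrite -[t in Compactness.close_n _ _ _ t]Tn_nthK close_n_Tn_of_fun => yt.
  apply: supnorm_lt => [|i]; first by case: (hrho (vec t)).
  by rewrite !mxE; have := yt i (ltn_ord i); rewrite inord_val.
have [_ [rhoP rhoNP]] := hrho (vec t).
case: (classic (P (vec t))) => Pt; last by case: (rhoNP Pt y near_t).
by exists (vec t); split; [exact: List.in_map | rewrite -rhoP].
Qed.

Lemma list_pos_lower_bound (T : Type) (f : T -> R) (l : seq T) :
  (forall t, Rlt 0 (f t)) -> exists eps, Rlt 0 eps /\ forall t, List.In t l -> Rle eps (f t).
Proof.
move=> f0; elim: l => [|a l [e [e0 he]]]; first by exists R1; split=> //; lra.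
exists (Rmin (f a) e); split; first exact: Rmin_pos.
by move=> t [<-|/he]; [apply: Rmin_l | apply: Rle_trans (Rmin_r _ _)].
Qed.

Lemma uniform_interior_radius n m (P : 'cV[R]_n.+1 -> Prop) (C : 'cV[R]_m -> Prop)
    (S : 'M[R]_(m, n.+1)) :
  Defs.closed_set P -> (forall y, P y -> Rle (supnorm y) 1) -> Defs.open_set C ->
  (forall y, P y -> C (S *m y)) ->
  exists eps, Rlt 0 eps /\ forall y w, P y -> Rlt (supnorm (w - S *m y)) eps -> C w.
Proof.
move=> Pcl Pb Copen SPC.
have [L [L0 SL]] := supnorm_mulmx_le S.
have radius t : exists rho, Rlt 0 rho /\
    (P t -> forall w, Rlt (supnorm (w - S *m t)) rho -> C w).
  case: (classic (P t)) => Pt; last by exists R1; split=> //; lra.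
  by have [rho [rho0 ball]] := Copen _ (SPC t Pt); exists rho.
have [rho hrho] := choice _ radius.
have rho0 t : Rlt 0 (rho t) by case: (hrho t).
have [l cover] : exists l : seq 'cV[R]_n.+1, forall y, P y ->
    exists t, List.In t l /\ P t /\ Rlt (supnorm (y - t)) (rho t / (2 * L)).
  by apply: closed_bounded_finite_cover => // t; apply: Rdiv_lt_0_compat; have := rho0 t; lra.
have [eps [eps0 eps_le]] : exists eps, Rlt 0 eps /\
    forall t, List.In t l -> Rle eps (rho t / 2).
  by apply: list_pos_lower_bound => t; apply: Rdiv_lt_0_compat; have := rho0 t; lra.
exists eps; split=> // y w Py wy.
have [t [tl [Pt yt]]] := cover y Py.
apply: (proj2 (hrho t) Pt).
have -> : w - S *m t = (w - S *m y) + S *m (y - t) by rewrite mulmxBr addrA subrK.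
apply: Rle_lt_trans (supnormD_le _ _) _.
have : Rlt (L * supnorm (y - t)) (rho t / 2).
  apply: (@Rlt_le_trans _ (L * Rdiv (rho t) (Rmult 2 L))).
    exact: Rmult_lt_compat_l.
  by right; field; lra.
have := SL (y - t); have := eps_le t tl; lra.
Qed.

Section LnBounds.
Local Open Scope R_scope.

Lemma ln_le x y : 0 < x -> x <= y -> ln x <= ln y.
Proof. by move=> x0 [/(ln_increasing _ _ x0) /Rlt_le | ->] //; apply: Rle_refl. Qed.

Lemma ln_ge0 x : 1 <= x -> 0 <= ln x.
Proof. by move=> x1; rewrite -ln_1; apply: ln_le; lra. Qed.

Lemma ln_one_add_div_ge0 a b : 0 <= a -> 0 < b -> 0 <= ln (1 + a / b).
Proof.
move=> a0 b0; apply: ln_ge0.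
have : 0 <= a / b by apply: Rmult_le_pos => //; apply: Rlt_le; apply: Rinv_0_lt_compat.
lra.
Qed.

Lemma ln_cross_ratio_le a d : 0 < d -> d <= a -> ln ((1 + a) / a) <= ln (1 + / d).
Proof.
move=> d0 da; have a0 : 0 < a by lra.
have -> : (1 + a) / a = 1 + / a by field; lra.
apply: ln_le; first by have := Rinv_0_lt_compat a a0; lra.
by have := Rinv_le_contravar d a d0 da; lra.
Qed.

End LnBounds.

Lemma Rsup_opt_lub E r : Rsup_opt E = Some r -> is_lub E r.
Proof.
rewrite /Rsup_opt; case: excluded_middle_informative => // H [<-].
by case: constructive_indefinite_description.
Qed.

Lemma hilbert_dist_mulmx n (C : 'cV[R]_n -> Prop) (g : 'M[R]_n) u v :
  (forall x, C (g *m x) <-> C x) -> g *m u != g *m v ->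
  hilbert_dist C (g *m u) (g *m v) = hilbert_dist C u v.
Proof.
move=> gC guv; rewrite /hilbert_dist (negbTE guv).
have -> : (u == v) = false by apply: contraNF guv => /eqP->.
have line_mulmx t : C (g *m u + t *: (g *m v - g *m u)) = C (u + t *: (v - u)).
  by apply: propositional_extensionality; rewrite -mulmxBr scalemxAr -mulmxDr.
rewrite /= (functional_extensionality _ _ line_mulmx).
by rewrite (functional_extensionality _ _ (fun s => line_mulmx (Ropp s))).
Qed.

Lemma hilbert_dist_le_of_balls n (C : 'cV[R]_n -> Prop) u v eps M :
  Rlt 0 eps -> Rle (supnorm (v - u)) M ->
  (forall w, Rlt (supnorm (w - u)) eps -> C w) ->
  (forall w, Rlt (supnorm (w - v)) eps -> C w) ->
  Rle (hilbert_dist C u v) (2 * ln (1 + 2 * M / eps)).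
Proof.
move=> eps0 vuM ball_u ball_v.
have M0 : Rle 0 M := Rle_trans _ _ _ (supnorm_ge0 _) vuM.
have lnK0 : Rle 0 (ln (1 + 2 * M / eps)) by apply: ln_one_add_div_ge0; lra.
rewrite /hilbert_dist; case: eqP => [_|uv]; first lra.
set m := supnorm (v - u) in vuM *.
have m0 : Rlt 0 m by apply: supnorm_gt0; rewrite subr_eq0; apply/eqP => /esym.
pose d := Rdiv eps (Rmult 2 m).
have d0 : Rlt 0 d by apply: Rdiv_lt_0_compat; lra.
have dm : Rmult d m = Rdiv eps 2 by rewrite /d; field; lra.
have ln_d : Rle (ln (1 + / d)) (ln (1 + 2 * M / eps)).
  have -> : Rinv d = Rdiv (Rmult 2 m) eps by rewrite /d; field; lra.
  have ratio0 : Rlt 0 (2 * m / eps) by apply: Rdiv_lt_0_compat; lra.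
  apply: ln_le; first lra.
  apply: Rplus_le_compat_l; apply: Rmult_le_compat_r; last lra.
  exact: Rlt_le (Rinv_0_lt_compat _ eps0).
(* The line points at parameters 1 + d and -d lie in the eps-balls around v
   and u, which bounds the boundary parameters tb and sa of [hilbert_dist]. *)
have beyond_v : C (u + Rplus 1 d *: (v - u)).
  apply: ball_v; have -> : u + Rplus 1 d *: (v - u) - v = d *: (v - u).
    by rewrite (_ : Rplus 1 d = 1 + d) // scalerDl scale1r addrA [u + _]addrC subrK addrAC subrr add0r.
  by rewrite supnormZ Rabs_right -/m; lra.
have before_u : C (u + Ropp d *: (v - u)).
  by apply: ball_u; rewrite addrAC subrr add0r supnormZ Rabs_Ropp Rabs_right -/m; lra.
apply: (@Rle_trans _ (ln (1 + 2 * M / eps) + ln (1 + 2 * M / eps))); last lra.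
apply: Rplus_le_compat.
  case E: Rsup_opt => [tb|]; last by rewrite ln_1.
  have tb_ge : Rle (1 + d) tb := proj1 (Rsup_opt_lub E) _ beyond_v.
  have -> : Rdiv tb (Rminus tb R1) = Rdiv (1 + (tb - 1)) (tb - 1) by congr Rdiv; ring.
  by apply: Rle_trans ln_d; apply: ln_cross_ratio_le; lra.
case E: Rsup_opt => [sa|]; last by rewrite ln_1.
by apply: Rle_trans ln_d; apply: ln_cross_ratio_le => //; apply: (proj1 (Rsup_opt_lub E)).
Qed.

Lemma cone_scale_iff n (C : 'cV[R]_n -> Prop) c x :
  proper_convex_open_cone C -> Rlt 0 c -> C (c *: x) <-> C x.
Proof.
move=> Ccone c0; split=> [|/(pcc_cone Ccone)/(_ c0)//].
have c_neq0 : c != 0 by apply/eqP; apply: Rgt_not_eq.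
by move=> /(pcc_cone Ccone)/(_ (Rinv_0_lt_compat _ c0)); rewrite scalerK.
Qed.

Lemma Lambda_preserves_cone n (C : 'cV[R]_n.+1 -> Prop) Gam g :
  proper_convex_open_cone C -> Lambda C Gam g -> forall x, C (g *m x) <-> C x.
Proof.
move=> Ccone; elim=> {g} [g [[_ [_ gC]] | ->] | | g h _ gC _ hC | g _ gC] x //.
- by rewrite mul_scalar_mx; apply: cone_scale_iff => //; apply: exp_pos.
- by rewrite mul1mx.
- by rewrite -mulmxA gC hC.
- case: (boolP (g \in unitmx)) => [g_unit | /invmx_out -> //].
  by rewrite -gC mulKVmx.
Qed.

Lemma hilbert_dist_images_bounded n m (P : 'cV[R]_n.+1 -> Prop) (C : 'cV[R]_m -> Prop)
    (S1 S2 : 'M[R]_(m, n.+1)) :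
  Defs.closed_set P -> (forall y, P y -> Rle (supnorm y) 1) -> Defs.open_set C ->
  (forall y, P y -> C (S1 *m y)) -> (forall y, P y -> C (S2 *m y)) ->
  exists B, Rle 0 B /\ forall y, P y -> Rle (hilbert_dist C (S1 *m y) (S2 *m y)) B.
Proof.
move=> Pcl Pb Copen S1PC S2PC.
have [eps1 [eps1_0 ball1]] := uniform_interior_radius Pcl Pb Copen S1PC.
have [eps2 [eps2_0 ball2]] := uniform_interior_radius Pcl Pb Copen S2PC.
have [L [L0 S21_L]] := supnorm_mulmx_le (S2 - S1).
pose eps := Rmin eps1 eps2.
have eps0 : Rlt 0 eps by apply: Rmin_pos.
exists (Rmult 2 (ln (1 + 2 * L / eps))); split.
  have : Rle 0 (ln (1 + 2 * L / eps)) by apply: ln_one_add_div_ge0; lra.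
  lra.
move=> y Py; apply: hilbert_dist_le_of_balls => // [|w /Rlt_le_trans near|w /Rlt_le_trans near].
- rewrite -mulmxBl; apply: Rle_trans (S21_L y) _.
  by rewrite -{2}(Rmult_1_r L); apply: Rmult_le_compat_l; [lra | apply: Pb].
- by apply: (ball1 y) => //; apply: near; apply: Rmin_l.
- by apply: (ball2 y) => //; apply: near; apply: Rmin_r.
Qed.

Lemma Lin_tau_mulmx n1 n2 (C1 : 'cV[R]_n1.+1 -> Prop) (C2 : 'cV[R]_n2.+1 -> Prop) L1 tau S g c
    (y : 'cV[R]_n1.+1) :
  Lin_tau C1 C2 L1 tau S -> L1 g -> S *m (g *m (c *: y)) = (c *: tau g) *m (S *m y).
Proof. by case=> _ S_equiv Lg; rewrite mulmxA S_equiv // -mulmxA -!scalemxAr scalemxAl. Qed.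

Theorem lemma7p3 (d1 d2 : nat)
    (C1 : 'cV[R]_d1.+1 -> Prop) (Gam1 : 'M[R]_d1.+1 -> Prop)
    (C2 : 'cV[R]_d2.+1 -> Prop) (Gam2 : 'M[R]_d2.+1 -> Prop)
    (tau : 'M[R]_d1.+1 -> 'M[R]_d2.+1)
    (hM1 : compact_convex_proj_manifold C1 Gam1)
    (hM2 : compact_convex_proj_manifold C2 Gam2)
    (htau : group_hom (Lambda C1 Gam1) (Lambda C2 Gam2) tau)
    (S1 S2 : 'M[R]_(d2.+1, d1.+1))
    (hS1 : Lin_tau C1 C2 (Lambda C1 Gam1) tau S1)
    (hS2 : Lin_tau C1 C2 (Lambda C1 Gam1) tau S2) :
  exists Rb : R, Rle R0 Rb /\
    forall x : 'cV[R]_d1.+1, C1 x -> Rle (hilbert_dist C2 (S1 *m x) (S2 *m x)) Rb.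
Proof.
have C2cone := ccpm_cone hM2.
have [K [[KC1 [Ksat Kcl]] K_covers]] := ccpm_cocompact hM1.
have [B [B0 bounded]] := hilbert_dist_images_bounded Kcl
  (fun y Py => Req_le _ _ Py.2) (pcc_open C2cone)
  (fun y Py => hS1.1 y (KC1 y Py.1)) (fun y Py => hS2.1 y (KC1 y Py.1)).
exists B; split=> // x /K_covers [g [y [Gg [Ky <-]]]].
have Lg : Lambda C1 Gam1 g by apply: gen_base; left.
case: (eqVneq (S1 *m (g *m y)) (S2 *m (g *m y))) => [-> | S12_neq].
  by rewrite /hilbert_dist eqxx.
have y0 : y != 0 by apply: contraNneq S12_neq => ->; rewrite !mulmx0.
have sy0 := supnorm_gt0 y0.
have sy_neq0 : supnorm y != 0 by apply/eqP; apply: Rgt_not_eq.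
rewrite -(scalerKV sy_neq0 y) (Lin_tau_mulmx _ _ hS1 Lg) (Lin_tau_mulmx _ _ hS2 Lg) in S12_neq *.
rewrite hilbert_dist_mulmx //; last first.
  move=> z; rewrite -scalemxAl cone_scale_iff //.
  by apply: (Lambda_preserves_cone C2cone); apply: htau.1.
apply: bounded; split; last exact: supnorm_normalize.
by apply: Ksat => //; apply: Rinv_0_lt_compat.
Qed.
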